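(* For $\theta\in[0,\pi/2]$ let $a_1=\frac{1}{\sqrt3}\cos\theta$, $a_2=\frac{1}{\sqrt3}\sin\theta$, $a_3=\sqrt{2/3}$, and define the torus $y_\theta:[0,2\pi]^2\to S^5$, \[y_\theta(s,\hat s)=\big(a_1\cos(s+\hat s),a_1\sin(s+\hat s),a_2\cos(s-\hat s),a_2\sin(s-\hat s),a_3\cos\hat s,a_3\sin\hat s\big).\] Then, with $\rho=\sqrt{2+\sin^2 2\theta}\in[\sqrt2,\sqrt3]$, \[W(y_\theta)=6\pi^2\Big(\frac{2}{\rho}-\frac{3}{\rho^3}\Big),\] which is increasing in $\rho$ on $[\sqrt2,\sqrt3]$. The torus $y_{\pi/4}$ is (up to an isometry of $S^5$) the Ejiri torus, with $W(y_{\pi/4})=2\pi^2\sqrt3$, and it attains the maximum of $W$ in this family; consequently the Ejiri torus is unstable as a Willmore surface in $S^5$.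
   Context: For a closed immersed surface $x:M\to S^N$ with mean curvature vector $\vec H$ and Gauss curvature $K$, the Willmore functional is $W(x)=\int_M(|\vec H|^2-K+1)\,dM$. The Ejiri torus is $E:(s,\hat s)\mapsto\frac{1}{\sqrt3}\big(\cos\hat s\cos\sqrt3 s,\ \sin\hat s\cos\sqrt3 s,\ \cos\hat s\sin\sqrt3 s,\ \sin\hat s\sin\sqrt3 s,\ \sqrt2\cos\hat s,\ \sqrt2\sin\hat s\big)\in S^5$; it is a Willmore surface. *)

From Stdlib Require Import Reals Lra ClassicalEpsilon.
Open Scope R_scope.

(* The derivative of f at x (the value l with derivable_pt_lim f x l;
   an arbitrary value if f is not differentiable at x). *)
Definition Dr (f : R -> R) (x : R) : R :=
  epsilon (inhabits 0) (fun l => derivable_pt_lim f x l).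

(* Riemann integral of f over [a,b] (arbitrary if not integrable). *)
Definition RInt (f : R -> R) (a b : R) : R :=
  epsilon (inhabits 0)
    (fun l => exists pr : Riemann_integrable f a b, RiemannInt pr = l).

(* A point of R^(N+1) is a function nat -> R (coordinates 0..N). *)
Definition Pt := nat -> R.
Definition Surf := R -> R -> Pt.

Definition dot (N : nat) (u v : Pt) : R := sum_f_R0 (fun i => u i * v i) N.

Definition sum2 (f : nat -> R) : R := f 0%nat + f 1%nat.

Definition pd (i : nat) (f : R -> R -> R) (s t : R) : R :=
  match i with
  | 0%nat => Dr (fun s' => f s' t) s
  | _ => Dr (fun t' => f s t') t
  end.

Definition pdv (i : nat) (x : Surf) : Surf :=
  fun s t k => pd i (fun s' t' => x s' t' k) s t.

Section Geom.
Variable N : nat.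
Variable x : Surf.

Definition gm (i j : nat) (s t : R) : R := dot N (pdv i x s t) (pdv j x s t).
Definition detg (s t : R) : R := gm 0 0 s t * gm 1 1 s t - gm 0 1 s t * gm 1 0 s t.
Definition ginv (i j : nat) (s t : R) : R :=
  match i, j with
  | 0%nat, 0%nat => gm 1 1 s t / detg s t
  | 1%nat, 1%nat => gm 0 0 s t / detg s t
  | _, _ => - gm 0 1 s t / detg s t
  end.

(* component of v normal to the surface inside T_{x}S^N:
   remove the radial part (x is a unit vector) and the tangential part *)
Definition perp (s t : R) (v : Pt) : Pt :=
  let a := dot N v (x s t) in
  let c k := sum2 (fun l => ginv k l s t * dot N v (pdv l x s t)) in
  fun i => v i - a * x s t i - c 0%nat * pdv 0 x s t i - c 1%nat * pdv 1 x s t i.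

Definition II (i j : nat) (s t : R) : Pt := perp s t (pdv j (pdv i x) s t).

Definition Hvec (s t : R) : Pt :=
  fun k => / 2 * sum2 (fun i => sum2 (fun j => ginv i j s t * II i j s t k)).

Definition Gam (k i j : nat) (s t : R) : R :=
  / 2 * sum2 (fun l => ginv k l s t *
        (pd i (gm j l) s t + pd j (gm i l) s t - pd l (gm i j) s t)).

(* Riemann tensor: R(d_i,d_j) d_k = R^l_{ijk} d_l,
   R(X,Y) = nabla_X nabla_Y - nabla_Y nabla_X - nabla_[X,Y] *)
Definition Riem (l i j k : nat) (s t : R) : R :=
  pd i (Gam l j k) s t - pd j (Gam l i k) s t
  + sum2 (fun m => Gam l i m s t * Gam m j k s t - Gam l j m s t * Gam m i k s t).

Definition Kgauss (s t : R) : R :=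
  sum2 (fun l => gm 0 l s t * Riem l 0 1 1 s t) / detg s t.

Definition willmore_density (s t : R) : R :=
  (dot N (Hvec s t) (Hvec s t) - Kgauss s t + 1) * sqrt (detg s t).

End Geom.

(* Willmore functional of the closed surface parametrized (one-to-one modulo
   the periods) by x on the fundamental domain [0,L1] x [0,L2]. *)
Definition Willmore (N : nat) (L1 L2 : R) (x : Surf) : R :=
  RInt (fun s => RInt (fun t => willmore_density N x s t) 0 L2) 0 L1.

Definition Mat := nat -> nat -> R.
Definition matvec (N : nat) (A : Mat) (v : Pt) : Pt :=
  fun i => sum_f_R0 (fun j => A i j * v j) N.
Definition orthogonal (N : nat) (A : Mat) : Prop :=
  forall i j, (i <= N)%nat -> (j <= N)%nat ->
    sum_f_R0 (fun k => A k i * A k j) N = if Nat.eqb i j then 1 else 0.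

Definition congruent (N : nat) (x1 x2 : Surf) : Prop :=
  exists A : Mat, orthogonal N A /\
    (forall s t, exists s' t', forall i, (i <= N)%nat ->
        x1 s t i = matvec N A (x2 s' t') i) /\
    (forall s' t', exists s t, forall i, (i <= N)%nat ->
        x1 s t i = matvec N A (x2 s' t') i).

Definition a1 (th : R) : R := / sqrt 3 * cos th.
Definition a2 (th : R) : R := / sqrt 3 * sin th.
Definition a3 : R := sqrt (2 / 3).

Definition ytheta (th : R) : Surf := fun s sh i =>
  match i with
  | 0%nat => a1 th * cos (s + sh)
  | 1%nat => a1 th * sin (s + sh)
  | 2%nat => a2 th * cos (s - sh)
  | 3%nat => a2 th * sin (s - sh)
  | 4%nat => a3 * cos sh
  | 5%nat => a3 * sin sh
  | _ => 0
  end.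

Definition ejiri : Surf := fun s sh i =>
  / sqrt 3 *
  match i with
  | 0%nat => cos sh * cos (sqrt 3 * s)
  | 1%nat => sin sh * cos (sqrt 3 * s)
  | 2%nat => cos sh * sin (sqrt 3 * s)
  | 3%nat => sin sh * sin (sqrt 3 * s)
  | 4%nat => sqrt 2 * cos sh
  | 5%nat => sqrt 2 * sin sh
  | _ => 0
  end.

Definition rho (th : R) : R := sqrt (2 + (sin (2 * th)) ^ 2).

Definition Wformula (r : R) : R := 6 * PI ^ 2 * (2 / r - 3 / r ^ 3).

Definition Wfam (th : R) : R := Willmore 5 (2 * PI) (2 * PI) (ytheta th).

(* y_theta is a product of three circles whose angles are linear in (s, t), so the
   coefficients of its first fundamental form are constant: the torus is flat, and its second
   derivatives are again products of circles, orthogonal to the tangent plane.  Hence |H|^2 and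
   the Willmore density are constant; with d = det g = rho^2 / 9 one gets
   (|H|^2 + 1) sqrt d = (1/d - 1/(6 d^2)) sqrt d, and integrating over [0, 2 pi]^2 gives
   6 pi^2 (2/rho - 3/rho^3).  As rho(theta) = sqrt (2 + sin^2 (2 theta)) is critical at pi/4,
   the second derivative of theta |-> W(y_theta) there is W'(sqrt 3) rho''(pi/4) = -8 pi^2/sqrt 3. *)

From Stdlib Require Import Reals Lra Lia Nsatz FunctionalExtensionality ClassicalEpsilon.
From Coquelicot Require Import Coquelicot.
Open Scope R_scope.

Lemma Dr_is_derive f x l : is_derive f x l -> Dr f x = l.
Proof.
  intros H%is_derive_Reals. unfold Dr.
  apply (uniqueness_limite f x); [|exact H].
  apply (epsilon_spec (inhabits 0) (fun l => derivable_pt_lim f x l)). now exists l.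
Qed.

Lemma RInt_const c a b : RInt (fun _ => c) a b = c * (b - a).
Proof.
  unfold RInt.
  assert (E : exists l, exists pr : Riemann_integrable (fun _ => c) a b, RiemannInt pr = l).
  { exists (c * (b - a)), (RiemannInt_P14 a b c). apply RiemannInt_P15. }
  destruct (epsilon_spec (inhabits 0) _ E) as [pr <-].
  rewrite (RiemannInt_P5 pr (RiemannInt_P14 a b c)). apply RiemannInt_P15.
Qed.

Lemma pd_const i (f : R -> R -> R) c s t : (forall s t, f s t = c) -> pd i f s t = 0.
Proof.
  intros Hf. destruct i; apply Dr_is_derive, (is_derive_ext (fun _ => c));
    try (intro; now rewrite Hf); now auto_derive.
Qed.

Section Surface.
Variables (N : nat) (x : Surf).

Lemma Kgauss_const_metric :
  (forall i j, exists c, forall s t, gm N x i j s t = c) -> forall s t, Kgauss N x s t = 0.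
Proof.
  intros Hg.
  assert (Hdg : forall i j l s t, pd i (gm N x j l) s t = 0).
  { intros i j l s t. destruct (Hg j l) as [c Hc]. exact (pd_const i _ c s t Hc). }
  assert (HGam : forall k i j s t, Gam N x k i j s t = 0).
  { intros k i j s t. unfold Gam, sum2. rewrite !Hdg. ring. }
  intros s t. unfold Kgauss, Riem, sum2.
  rewrite !(pd_const _ (Gam N x _ _ _) 0), !HGam; auto. unfold Rdiv. ring.
Qed.

Lemma perp_normal s t v :
  dot N v (pdv 0 x s t) = 0 -> dot N v (pdv 1 x s t) = 0 ->
  perp N x s t v = fun i => v i - dot N v (x s t) * x s t i.
Proof.
  intros H0 H1. extensionality i. unfold perp, sum2. rewrite H0, H1. ring.
Qed.

Lemma Willmore_const_density c L1 L2 :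
  (forall s t, willmore_density N x s t = c) -> Willmore N L1 L2 x = c * L1 * L2.
Proof.
  intros Hc. unfold Willmore.
  rewrite (functional_extensionality (fun s => RInt (fun t => willmore_density N x s t) 0 L2)
             (fun _ => c * L2)).
  - rewrite RInt_const. ring.
  - intro s. replace (fun t => willmore_density N x s t) with (fun _ : R => c).
    + rewrite RInt_const. ring.
    + extensionality t. auto.
Qed.
End Surface.

Definition circ3 (u v w p q r : R) : Pt := fun i =>
  match i with
  | 0%nat => u * cos p
  | 1%nat => u * sin p
  | 2%nat => v * cos q
  | 3%nat => v * sin q
  | 4%nat => w * cos r
  | 5%nat => w * sin r
  | _ => 0
  end.

Lemma dot_circ3 u v w u' v' w' p q r :
  dot 5 (circ3 u v w p q r) (circ3 u' v' w' p q r) = u * u' + v * v' + w * w'.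
Proof.
  unfold dot; simpl.
  pose proof (sin2_cos2 p); pose proof (sin2_cos2 q); pose proof (sin2_cos2 r).
  unfold Rsqr in *. nsatz.
Qed.

Lemma cos_add_PI2 a : cos (a + PI / 2) = - sin a.
Proof. rewrite cos_plus, cos_PI2, sin_PI2. ring. Qed.

Lemma sin_add_PI2 a : sin (a + PI / 2) = cos a.
Proof. rewrite sin_plus, cos_PI2, sin_PI2. ring. Qed.

Lemma dot_circ3_quarter u v w u' v' w' p q r :
  dot 5 (circ3 u v w p q r) (circ3 u' v' w' (p + PI / 2) (q + PI / 2) (r + PI / 2)) = 0.
Proof. unfold dot; simpl. rewrite !cos_add_PI2, !sin_add_PI2. ring. Qed.

Lemma sqrt3_pos : 0 < sqrt 3.
Proof. apply sqrt_lt_R0; lra. Qed.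

Lemma sqrt3_sq : sqrt 3 * sqrt 3 = 3.
Proof. apply sqrt_sqrt; lra. Qed.

Lemma a1_sq_add_a2_sq th : a1 th ^ 2 + a2 th ^ 2 = 1 / 3.
Proof.
  unfold a1, a2. pose proof (sin2_cos2 th) as Hsc. unfold Rsqr in Hsc.
  pose proof sqrt3_sq. pose proof sqrt3_pos.
  field_simplify; [|lra]. replace (sqrt 3 ^ 2) with 3 by (simpl; lra). lra.
Qed.

Lemma a3_sq : a3 ^ 2 = 2 / 3.
Proof. unfold a3. simpl. rewrite Rmult_1_r. apply sqrt_sqrt. lra. Qed.

Section Torus.
Variable th : R.

Lemma ytheta_circ3 s t : ytheta th s t = circ3 (a1 th) (a2 th) a3 (s + t) (s - t) t.
Proof. reflexivity. Qed.

(* Differentiating [(cos p, sin p)] along a linear angle rotates it by a quarter turn, hence the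
   shifted angles of the first derivatives. *)
Definition ytheta_s : Surf := fun s t =>
  circ3 (a1 th) (a2 th) 0 (s + t + PI / 2) (s - t + PI / 2) (t + PI / 2).
Definition ytheta_t : Surf := fun s t =>
  circ3 (a1 th) (- a2 th) a3 (s + t + PI / 2) (s - t + PI / 2) (t + PI / 2).
Definition ytheta_ss : Surf := fun s t => circ3 (- a1 th) (- a2 th) 0 (s + t) (s - t) t.
Definition ytheta_st : Surf := fun s t => circ3 (- a1 th) (a2 th) 0 (s + t) (s - t) t.
Definition ytheta_tt : Surf := fun s t => circ3 (- a1 th) (- a2 th) (- a3) (s + t) (s - t) t.

Ltac pdv_circ3 :=
  do 2 (apply functional_extensionality; intro);
  apply functional_extensionality; intros [|[|[|[|[|[|]]]]]]; simpl;
  apply Dr_is_derive; auto_derive; auto;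
  rewrite ?cos_add_PI2, ?sin_add_PI2; unfold Rminus; ring.

Lemma pdv_ytheta_s : pdv 0 (ytheta th) = ytheta_s.
Proof. pdv_circ3. Qed.
Lemma pdv_ytheta_t : pdv 1 (ytheta th) = ytheta_t.
Proof. pdv_circ3. Qed.
Lemma pdv_ytheta_ss : pdv 0 ytheta_s = ytheta_ss.
Proof. pdv_circ3. Qed.
Lemma pdv_ytheta_st : pdv 1 ytheta_s = ytheta_st.
Proof. pdv_circ3. Qed.
Lemma pdv_ytheta_ts : pdv 0 ytheta_t = ytheta_st.
Proof. pdv_circ3. Qed.
Lemma pdv_ytheta_tt : pdv 1 ytheta_t = ytheta_tt.
Proof. pdv_circ3. Qed.

Definition gst : R := a1 th ^ 2 - a2 th ^ 2.
Definition dety : R := 1 / 3 - gst ^ 2.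

(* [pd] reads every direction index other than 0 as the t-direction. *)
Definition gy (i j : nat) : R :=
  match i, j with
  | 0%nat, 0%nat => 1 / 3
  | S _, S _ => 1
  | _, _ => gst
  end.

Lemma dety_pos : 0 < dety.
Proof.
  unfold dety, gst. pose proof (a1_sq_add_a2_sq th).
  pose proof (pow2_ge_0 (a1 th)). pose proof (pow2_ge_0 (a2 th)). nra.
Qed.

Lemma gm_ytheta i j s t : gm 5 (ytheta th) i j s t = gy i j.
Proof.
  pose proof (a1_sq_add_a2_sq th). pose proof a3_sq. unfold gm.
  destruct i as [|i], j as [|j]; simpl gy;
    try change (pdv (S i)) with (pdv 1); try change (pdv (S j)) with (pdv 1);
    rewrite ?pdv_ytheta_s, ?pdv_ytheta_t; unfold ytheta_s, ytheta_t;
    rewrite dot_circ3; unfold gst; nra.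
Qed.

Lemma detg_ytheta s t : detg 5 (ytheta th) s t = dety.
Proof. unfold detg. rewrite !gm_ytheta. simpl. unfold dety. ring. Qed.

Lemma Kgauss_ytheta s t : Kgauss 5 (ytheta th) s t = 0.
Proof.
  apply Kgauss_const_metric. intros i j. exists (gy i j). apply gm_ytheta.
Qed.

Lemma perp_ytheta_circ3 s t u v w :
  perp 5 (ytheta th) s t (circ3 u v w (s + t) (s - t) t) =
  fun k => circ3 u v w (s + t) (s - t) t k - (u * a1 th + v * a2 th + w * a3) * ytheta th s t k.
Proof.
  rewrite perp_normal, ytheta_circ3, dot_circ3; [reflexivity| |];
    rewrite ?pdv_ytheta_s, ?pdv_ytheta_t; apply dot_circ3_quarter.
Qed.

Lemma II_ytheta_ss s t :
  II 5 (ytheta th) 0 0 s t = fun k => ytheta_ss s t k + / 3 * ytheta th s t k.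
Proof.
  unfold II. rewrite pdv_ytheta_s, pdv_ytheta_ss. unfold ytheta_ss.
  rewrite perp_ytheta_circ3. pose proof (a1_sq_add_a2_sq th).
  replace (- a1 th * a1 th + - a2 th * a2 th + 0 * a3) with (- / 3) by nra.
  extensionality k. ring.
Qed.

Lemma II_ytheta_st s t :
  II 5 (ytheta th) 0 1 s t = fun k => ytheta_st s t k + gst * ytheta th s t k.
Proof.
  unfold II. rewrite pdv_ytheta_s, pdv_ytheta_st. unfold ytheta_st.
  rewrite perp_ytheta_circ3. unfold gst.
  extensionality k. ring.
Qed.

Lemma II_ytheta_ts s t : II 5 (ytheta th) 1 0 s t = II 5 (ytheta th) 0 1 s t.
Proof. unfold II. now rewrite pdv_ytheta_s, pdv_ytheta_t, pdv_ytheta_st, pdv_ytheta_ts. Qed.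

Lemma II_ytheta_tt s t : II 5 (ytheta th) 1 1 s t = fun _ => 0.
Proof.
  unfold II. rewrite pdv_ytheta_t, pdv_ytheta_tt. unfold ytheta_tt.
  rewrite perp_ytheta_circ3. pose proof (a1_sq_add_a2_sq th). pose proof a3_sq.
  replace (- a1 th * a1 th + - a2 th * a2 th + - a3 * a3) with (-1) by nra.
  extensionality k. destruct k as [|[|[|[|[|[|k]]]]]]; simpl; ring.
Qed.

Lemma Hvec_ytheta s t :
  Hvec 5 (ytheta th) s t =
  circ3 (a1 th * (- 2 / 3 + 2 * gst - 2 * gst ^ 2) / (2 * dety))
        (a2 th * (- 2 / 3 - 2 * gst - 2 * gst ^ 2) / (2 * dety))
        (a3 * (1 / 3 - 2 * gst ^ 2) / (2 * dety)) (s + t) (s - t) t.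
Proof.
  unfold Hvec, sum2, ginv. rewrite II_ytheta_ts, II_ytheta_ss, II_ytheta_st, II_ytheta_tt.
  rewrite !gm_ytheta, !detg_ytheta. simpl gy. pose proof dety_pos.
  extensionality k. unfold ytheta_ss, ytheta_st.
  destruct k as [|[|[|[|[|[|k]]]]]]; simpl; field; lra.
Qed.

Lemma willmore_density_ytheta s t :
  willmore_density 5 (ytheta th) s t = (1 / dety - 1 / (6 * dety ^ 2)) * sqrt dety.
Proof.
  unfold willmore_density. rewrite Kgauss_ytheta, detg_ytheta, Hvec_ytheta, dot_circ3.
  pose proof dety_pos. pose proof (a1_sq_add_a2_sq th).
  assert (E1 : a1 th ^ 2 = (1 / 3 + gst) / 2) by (unfold gst; lra).
  assert (E2 : a2 th ^ 2 = (1 / 3 - gst) / 2) by (unfold gst; lra).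
  f_equal. field_simplify; [|lra..]. rewrite E1, E2, a3_sq. unfold dety in *. field. lra.
Qed.
End Torus.

Lemma gst_cos th : gst th = cos (2 * th) / 3.
Proof.
  unfold gst, a1, a2. rewrite cos_2a. pose proof sqrt3_sq. pose proof sqrt3_pos.
  field_simplify; [|lra]. replace (sqrt 3 ^ 2) with 3 by (simpl; lra). field.
Qed.

Lemma rho_dety th : rho th = 3 * sqrt (dety th).
Proof.
  unfold rho, dety. rewrite gst_cos.
  pose proof (sin2_cos2 (2 * th)) as Hsc. unfold Rsqr in Hsc.
  replace (2 + sin (2 * th) ^ 2) with (3 * 3 * (1 / 3 - (cos (2 * th) / 3) ^ 2)) by (simpl; lra).
  rewrite !sqrt_mult_alt by lra. rewrite sqrt3_sq. ring.
Qed.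

Lemma Wfam_formula th : Wfam th = Wformula (rho th).
Proof.
  unfold Wfam. rewrite (Willmore_const_density _ _ _ _ _ (willmore_density_ytheta th)).
  rewrite rho_dety. unfold Wformula.
  pose proof (dety_pos th) as Hd. pose proof (sqrt_lt_R0 _ Hd) as Hq.
  pose proof (sqrt_sqrt _ (Rlt_le _ _ Hd)) as Hqq.
  set (q := sqrt (dety th)) in *. rewrite <- Hqq. field. lra.
Qed.

Lemma rho_bounds th : sqrt 2 <= rho th <= sqrt 3.
Proof.
  unfold rho. pose proof (sin2_cos2 (2 * th)) as Hsc. unfold Rsqr in Hsc.
  pose proof (pow2_ge_0 (sin (2 * th))). pose proof (pow2_ge_0 (cos (2 * th))).
  split; apply sqrt_le_1_alt; simpl in *; lra.
Qed.

Lemma rho_pos th : 0 < rho th.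
Proof. pose proof (rho_bounds th). pose proof (sqrt_lt_R0 2 ltac:(lra)). lra. Qed.

Lemma rho_PI4 : rho (PI / 4) = sqrt 3.
Proof.
  unfold rho. replace (2 * (PI / 4)) with (PI / 2) by field. rewrite sin_PI2. f_equal. ring.
Qed.

Lemma Wformula_lt r1 r2 : 0 < r1 -> r1 < r2 -> r1 * r2 <= 9 / 2 -> Wformula r1 < Wformula r2.
Proof.
  intros H1 H12 Hp. unfold Wformula. apply Rmult_lt_compat_l.
  { pose proof PI_RGT_0. nra. }
  assert (Hk : 2 / r2 - 3 / r2 ^ 3 - (2 / r1 - 3 / r1 ^ 3) =
    (r2 - r1) * (3 * (r1 * r1 + r1 * r2 + r2 * r2) - 2 * (r1 * r2) * (r1 * r2)) / (r1 ^ 3 * r2 ^ 3))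
    by (field; lra).
  enough (0 < (r2 - r1) * (3 * (r1 * r1 + r1 * r2 + r2 * r2) - 2 * (r1 * r2) * (r1 * r2))
              / (r1 ^ 3 * r2 ^ 3)) by lra.
  assert (0 < r1 * r2) by nra.
  assert (2 * (r1 * r2) * (r1 * r2) <= 9 * (r1 * r2)) by nra.
  assert (9 * (r1 * r2) < 3 * (r1 * r1 + r1 * r2 + r2 * r2)) by nra.
  apply Rdiv_lt_0_compat; [apply Rmult_lt_0_compat; lra | apply Rmult_lt_0_compat; apply pow_lt; lra].
Qed.

(* By the addition formulas, y_{pi/4}(s, t) is this rotation applied to E(s / sqrt 3, t). *)
Definition ejiri_rotation : Mat := fun i j =>
  match i, j with
  | 0%nat, 0%nat => / sqrt 2 | 0%nat, 3%nat => - / sqrt 2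
  | 1%nat, 1%nat => / sqrt 2 | 1%nat, 2%nat => / sqrt 2
  | 2%nat, 0%nat => / sqrt 2 | 2%nat, 3%nat => / sqrt 2
  | 3%nat, 1%nat => - / sqrt 2 | 3%nat, 2%nat => / sqrt 2
  | 4%nat, 4%nat => 1 | 5%nat, 5%nat => 1
  | _, _ => 0
  end.

Lemma ejiri_rotation_orthogonal : orthogonal 5 ejiri_rotation.
Proof.
  intros i j Hi Hj.
  assert (Hh : 2 * (/ sqrt 2 * / sqrt 2) = 1).
  { rewrite <- Rinv_mult, sqrt_sqrt by lra. field. }
  destruct i as [|[|[|[|[|[|i]]]]]]; try lia; destruct j as [|[|[|[|[|[|j]]]]]]; try lia;
    unfold ejiri_rotation; simpl; set (h := / sqrt 2) in *; clearbody h; nsatz.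
Qed.

Lemma ytheta_PI4_ejiri s t i : (i <= 5)%nat ->
  ytheta (PI / 4) s t i = matvec 5 ejiri_rotation (ejiri (s / sqrt 3) t) i.
Proof.
  intros Hi. pose proof (sqrt_lt_R0 2 ltac:(lra)). pose proof sqrt3_pos.
  assert (E : sqrt 3 * (s / sqrt 3) = s) by (field; lra).
  assert (Ha3 : a3 = sqrt 2 / sqrt 3) by (apply sqrt_div_alt; lra).
  unfold matvec, ejiri, ytheta, a1, a2. rewrite Ha3.
  destruct i as [|[|[|[|[|[|i]]]]]]; try lia; unfold ejiri_rotation; simpl; rewrite E;
    rewrite ?cos_PI4, ?sin_PI4, ?cos_plus, ?sin_plus, ?cos_minus, ?sin_minus; field; lra.
Qed.

Lemma ytheta_PI4_congruent_ejiri : congruent 5 (ytheta (PI / 4)) ejiri.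
Proof.
  exists ejiri_rotation. split; [apply ejiri_rotation_orthogonal|]. split.
  - intros s t. exists (s / sqrt 3), t. now apply ytheta_PI4_ejiri.
  - intros s t. exists (s * sqrt 3), t. intros i Hi.
    replace s with (s * sqrt 3 / sqrt 3) at 2
      by (pose proof sqrt3_pos; field; lra).
    now apply ytheta_PI4_ejiri.
Qed.

Definition dWformula (r : R) : R := 6 * PI ^ 2 * (9 / r ^ 4 - 2 / r ^ 2).
Definition drho (th : R) : R := sin (4 * th) / rho th.
Definition dWfam (th : R) : R := dWformula (rho th) * drho th.

Lemma is_derive_Wformula r : 0 < r -> is_derive Wformula r (dWformula r).
Proof.
  intros Hr. unfold Wformula, dWformula. auto_derive.
  - repeat split; apply Rgt_not_eq; repeat apply Rmult_lt_0_compat; lra.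
  - field. lra.
Qed.

Lemma is_derive_rho th : is_derive rho th (drho th).
Proof.
  pose proof (rho_pos th) as Hr. unfold drho, rho in *. auto_derive.
  - pose proof (pow2_ge_0 (sin (2 * th))). simpl in *. lra.
  - replace (4 * th) with (2 * (2 * th)) by ring. rewrite (sin_2a (2 * th)). simpl in *. field. lra.
Qed.

Lemma is_derive_drho_PI4 : is_derive drho (PI / 4) (- 4 / sqrt 3).
Proof.
  assert (Hpi : 4 * (PI / 4) = PI) by field.
  replace (- 4 / sqrt 3) with
    ((4 * cos (4 * (PI / 4)) * rho (PI / 4) - sin (4 * (PI / 4)) * drho (PI / 4)) / rho (PI / 4) ^ 2).
  - apply (is_derive_div (fun th => sin (4 * th)) rho).
    + auto_derive; [trivial | ring].
    + apply is_derive_rho.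
    + apply Rgt_not_eq, rho_pos.
  - rewrite rho_PI4, Hpi, sin_PI, cos_PI. pose proof sqrt3_pos. field. lra.
Qed.

Lemma is_derive_Wfam th : is_derive Wfam th (dWfam th).
Proof.
  unfold dWfam.
  apply (is_derive_ext (fun x => Wformula (rho x))); [intro; now rewrite Wfam_formula|].
  rewrite Rmult_comm. apply (is_derive_comp Wformula rho).
  - apply is_derive_Wformula, rho_pos.
  - apply is_derive_rho.
Qed.

Lemma derivable_pt_lim_mult_root f g x f' g' :
  derivable_pt_lim f x f' -> derivable_pt_lim g x g' -> g x = 0 ->
  derivable_pt_lim (fun y => f y * g y) x (f x * g').
Proof.
  intros Hf Hg Hg0. replace (f x * g') with (f' * g x + f x * g') by (rewrite Hg0; ring).
  exact (derivable_pt_lim_mult f g x f' g' Hf Hg).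
Qed.

Lemma derivable_pt_lim_dWfam_PI4 : derivable_pt_lim dWfam (PI / 4) (- (8 * PI ^ 2 / sqrt 3)).
Proof.
  unfold dWfam.
  assert (Hd : ex_derive (fun th => dWformula (rho th)) (PI / 4)).
  { apply (ex_derive_comp dWformula rho).
    - unfold dWformula. pose proof (rho_pos (PI / 4)). auto_derive.
      repeat split; apply Rgt_not_eq; repeat apply Rmult_lt_0_compat; lra.
    - exists (drho (PI / 4)). apply is_derive_rho. }
  destruct Hd as [l Hl].
  replace (- (8 * PI ^ 2 / sqrt 3)) with (dWformula (rho (PI / 4)) * (- 4 / sqrt 3)).
  - apply (derivable_pt_lim_mult_root (fun th => dWformula (rho th)) drho _ l).
    + now apply is_derive_Reals.
    + apply is_derive_Reals, is_derive_drho_PI4.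
    + unfold drho. replace (4 * (PI / 4)) with PI by field. rewrite sin_PI. unfold Rdiv. ring.
  - rewrite rho_PI4. unfold dWformula. pose proof sqrt3_pos.
    replace (sqrt 3 ^ 4) with 9 by (simpl; rewrite Rmult_1_r, <- Rmult_assoc, sqrt3_sq; nra).
    replace (sqrt 3 ^ 2) with 3 by (simpl; rewrite Rmult_1_r, sqrt3_sq; ring).
    field. lra.
Qed.

Lemma Wfam_PI4 : Wfam (PI / 4) = 2 * PI ^ 2 * sqrt 3.
Proof.
  rewrite Wfam_formula, rho_PI4. unfold Wformula. pose proof sqrt3_pos.
  replace (sqrt 3 ^ 3) with (3 * sqrt 3) by (simpl; rewrite Rmult_1_r, <- Rmult_assoc, sqrt3_sq; ring).
  replace (2 * PI ^ 2 * sqrt 3) with (2 * PI ^ 2 * (sqrt 3 * sqrt 3) / sqrt 3) by (field; lra).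
  rewrite sqrt3_sq. field. lra.
Qed.

Lemma Wfam_le_PI4 th : Wfam th <= Wfam (PI / 4).
Proof.
  rewrite !Wfam_formula, rho_PI4. destruct (rho_bounds th) as [Hlo Hhi].
  destruct (Req_dec (rho th) (sqrt 3)) as [E | E]; [rewrite E; lra|].
  left. apply Wformula_lt; [apply rho_pos | lra |].
  pose proof sqrt3_sq. pose proof (rho_pos th). nra.
Qed.

Theorem proposition5p1 :
  (* W(y_theta) = 6 pi^2 (2/rho - 3/rho^3), with rho in [sqrt 2, sqrt 3] *)
  (forall th, 0 <= th <= PI / 2 ->
     sqrt 2 <= rho th <= sqrt 3 /\ Wfam th = Wformula (rho th)) /\
  (* this expression is increasing in rho on [sqrt 2, sqrt 3] *)
  (forall r1 r2, sqrt 2 <= r1 -> r1 < r2 -> r2 <= sqrt 3 ->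
     Wformula r1 < Wformula r2) /\
  (* y_{pi/4} is the Ejiri torus up to an isometry of S^5 *)
  congruent 5 (ytheta (PI / 4)) ejiri /\
  (* its Willmore energy *)
  Wfam (PI / 4) = 2 * PI ^ 2 * sqrt 3 /\
  (* it attains the maximum of W in the family *)
  (forall th, 0 <= th <= PI / 2 -> Wfam th <= Wfam (PI / 4)) /\
  (* instability: along the variation theta |-> y_theta of y_{pi/4}
     the second variation of W is negative *)
  (exists W' : R -> R,
     (forall th, 0 < th < PI / 2 -> derivable_pt_lim Wfam th (W' th)) /\
     exists c, derivable_pt_lim W' (PI / 4) c /\ c < 0).
Proof.
  split; [intros th _; split; [apply rho_bounds | apply Wfam_formula]|].
  split.
  { intros r1 r2 H1 H12 H2. pose proof (sqrt_lt_R0 2 ltac:(lra)). pose proof sqrt3_sq.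
    apply Wformula_lt; nra. }
  split; [exact ytheta_PI4_congruent_ejiri|].
  split; [exact Wfam_PI4|].
  split; [intros th _; apply Wfam_le_PI4|].
  exists dWfam. split.
  - intros th _. apply is_derive_Reals, is_derive_Wfam.
  - exists (- (8 * PI ^ 2 / sqrt 3)). split; [exact derivable_pt_lim_dWfam_PI4|].
    apply Ropp_lt_gt_0_contravar, Rdiv_lt_0_compat; [pose proof PI_RGT_0; nra | apply sqrt3_pos].
Qed.
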